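(* Let $n \ge 1$ and let $N$ be a $\lambda$-term such that $N a_1 a_2 \ldots a_n =_\beta a_1 a_2 \ldots a_n (N a_1 a_2 \ldots a_n)$ for distinct variables $a_1,\dots,a_n$ not free in $N$. Then $N\mathbf{I}\cdots\mathbf{I}$, with $n-1$ copies of $\mathbf{I}\equiv\lambda x.x$, is a fixed point combinator.
   Context: Untyped $\lambda$-calculus modulo $\alpha$-conversion; application associates to the left, so $a_1a_2\ldots a_n(P)$ means $(\cdots(a_1a_2)\cdots a_n)P$. A term $Y$ is a fixed point combinator if $Yx =_\beta x(Yx)$ for a variable $x$ not free in $Y$. *)

(* Untyped lambda calculus with de Bruijn indices:
   terms are taken modulo alpha-conversion; free variables are the free indices. *)
From mathcomp Require Import all_boot.
Set Implicit Arguments. Unset Strict Implicit. Unset Printing Implicit Defensive.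

Inductive term : Type :=
| Var of nat
| App of term & term
| Lam of term.

Fixpoint liftn (d c : nat) (t : term) : term :=
  match t with
  | Var i => Var (if i < c then i else i + d)
  | App a b => App (liftn d c a) (liftn d c b)
  | Lam a => Lam (liftn d c.+1 a)
  end.

Fixpoint subst (k : nat) (u : term) (t : term) : term :=
  match t with
  | Var i => if i < k then Var i else if i == k then liftn k 0 u else Var i.-1
  | App a b => App (subst k u a) (subst k u b)
  | Lam a => Lam (subst k.+1 u a)
  end.

Inductive beta1 : term -> term -> Prop :=
| beta1_redex t u : beta1 (App (Lam t) u) (subst 0 u t)
| beta1_appl a a' b : beta1 a a' -> beta1 (App a b) (App a' b)
| beta1_appr a b b' : beta1 b b' -> beta1 (App a b) (App a b')
| beta1_lam a a' : beta1 a a' -> beta1 (Lam a) (Lam a').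

Inductive beta_eq : term -> term -> Prop :=
| beq_step a b : beta1 a b -> beta_eq a b
| beq_refl a : beta_eq a a
| beq_sym a b : beta_eq a b -> beta_eq b a
| beq_trans a b c : beta_eq a b -> beta_eq b c -> beta_eq a c.

Fixpoint free (x : nat) (t : term) : bool :=
  match t with
  | Var i => i == x
  | App a b => free x a || free x b
  | Lam a => free x.+1 a
  end.

Definition apps (t : term) (s : seq term) : term := foldl App t s.

Definition I_comb : term := Lam (Var 0).

Definition fpc (Y : term) : Prop :=
  forall x : nat, ~~ free x Y -> beta_eq (App Y (Var x)) (App (Var x) (App Y (Var x))).

(* Substituting I for a_1, ..., a_(n-1) and x for a_n in the hypothesis leaves
   N unchanged (the a_i are not free in N) and turns it into
   N I ... I x =_beta I ... I x (N I ... I x); the head spine I ... I x reduces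
   to x.  To substitute all the a_i at once we use parallel substitutions, for
   which stability of beta reduction is the usual substitution lemma. *)
From mathcomp Require Import all_boot.

Definition up_ren (f : nat -> nat) (i : nat) : nat :=
  if i is j.+1 then (f j).+1 else 0.

Fixpoint ren (f : nat -> nat) (t : term) : term :=
  match t with
  | Var i => Var (f i)
  | App a b => App (ren f a) (ren f b)
  | Lam a => Lam (ren (up_ren f) a)
  end.

Definition up_sub (s : nat -> term) (i : nat) : term :=
  if i is j.+1 then ren S (s j) else Var 0.

Fixpoint sub (s : nat -> term) (t : term) : term :=
  match t with
  | Var i => s i
  | App a b => App (sub s a) (sub s b)
  | Lam a => Lam (sub (up_sub s) a)
  end.

Definition scons (u : term) (s : nat -> term) (i : nat) : term :=
  if i is j.+1 then s j else u.

Lemma eq_ren f g t : f =1 g -> ren f t = ren g t.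
Proof.
elim: t f g => [i|a IHa b IHb|a IHa] f g fg /=; first by rewrite fg.
  by rewrite (IHa f g) // (IHb f g).
by rewrite (IHa _ (up_ren g)) // => -[|i] //=; rewrite fg.
Qed.

Lemma eq_sub s r t : s =1 r -> sub s t = sub r t.
Proof.
elim: t s r => [i|a IHa b IHb|a IHa] s r sr /=; first by rewrite sr.
  by rewrite (IHa s r) // (IHb s r).
by rewrite (IHa _ (up_sub r)) // => -[|i] //=; rewrite sr.
Qed.

Lemma ren_ren f g t : ren f (ren g t) = ren (f \o g) t.
Proof.
elim: t f g => [i|a IHa b IHb|a IHa] f g //=; first by rewrite IHa IHb.
by rewrite IHa; congr Lam; apply: eq_ren => -[|i].
Qed.

Lemma sub_ren s f t : sub s (ren f t) = sub (s \o f) t.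
Proof.
elim: t s f => [i|a IHa b IHb|a IHa] s f //=; first by rewrite IHa IHb.
by rewrite IHa; congr Lam; apply: eq_sub => -[|i].
Qed.

Lemma ren_sub f s t : ren f (sub s t) = sub (ren f \o s) t.
Proof.
elim: t f s => [i|a IHa b IHb|a IHa] f s //=; first by rewrite IHa IHb.
rewrite IHa; congr Lam; apply: eq_sub => -[|i] //=.
by rewrite !ren_ren; apply: eq_ren.
Qed.

Lemma sub_sub s r t : sub s (sub r t) = sub (sub s \o r) t.
Proof.
elim: t s r => [i|a IHa b IHb|a IHa] s r //=; first by rewrite IHa IHb.
rewrite IHa; congr Lam; apply: eq_sub => -[|i] //=.
by rewrite sub_ren ren_sub; apply: eq_sub.
Qed.

Lemma sub_Var t : sub Var t = t.
Proof.
elim: t => [i|a IHa b IHb|a IHa] //=; first by rewrite IHa IHb.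
by rewrite (@eq_sub _ Var) ?IHa // => -[|i].
Qed.

Lemma sub_free_id s t : (forall i, free i t -> s i = Var i) -> sub s t = t.
Proof.
elim: t s => [i|a IHa b IHb|a IHa] s sV /=.
- by apply: sV => /=.
- by rewrite IHa ?IHb // => i ti; apply: sV => /=; rewrite ti ?orbT.
- by rewrite IHa // => -[|i] //= ti; rewrite sV.
Qed.

Lemma liftn_as_ren d c t :
  liftn d c t = ren (fun i => if i < c then i else i + d) t.
Proof.
elim: t c => [i|a IHa b IHb|a IHa] c //=; first by rewrite IHa IHb.
by rewrite IHa; congr Lam; apply: eq_ren => -[|i] //=; rewrite ltnS; case: ifP.
Qed.

Lemma liftn0 c t : liftn 0 c t = t.
Proof. by elim: t c => [i|a IHa b IHb|a IHa] c /=; rewrite ?IHa ?IHb ?addn0 ?if_same. Qed.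

Lemma subst_as_sub k u t :
  subst k u t =
  sub (fun i => if i < k then Var i else if i == k then liftn k 0 u else Var i.-1) t.
Proof.
elim: t k => [i|a IHa b IHb|a IHa] k //=; first by rewrite IHa IHb.
rewrite IHa; congr Lam; apply: eq_sub => -[|i] //=.
rewrite ltnS eqSS; case: ltnP => // ki; case: eqP => //= ik.
  by rewrite !liftn_as_ren ren_ren; apply: eq_ren => j /=; rewrite addnS.
by case: i ki ik => [|i] //=; rewrite leqn0 => /eqP ->.
Qed.

Lemma subst0_as_sub u t : subst 0 u t = sub (scons u Var) t.
Proof.
by rewrite subst_as_sub; apply: eq_sub => -[|i] //=; rewrite liftn0.
Qed.

Lemma beta1_sub s a b : beta1 a b -> beta1 (sub s a) (sub s b).
Proof.
move=> ab; elim: ab s => [t u|a0 a' b0 _ IH|a0 b0 b' _ IH|a0 a' _ IH] s /=;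
  try by constructor.
have -> : sub s (subst 0 u t) = subst 0 (sub s u) (sub (up_sub s) t).
  rewrite !subst0_as_sub !sub_sub; apply: eq_sub => -[|i] //=.
  by rewrite sub_ren -[LHS]sub_Var; apply: eq_sub.
exact: beta1_redex.
Qed.

Lemma beta_eq_hom (f : term -> term) :
  (forall a b, beta1 a b -> beta1 (f a) (f b)) ->
  forall a b, beta_eq a b -> beta_eq (f a) (f b).
Proof.
move=> f_beta1 a0 b0; elim=> [a b ab|a|a b _ IH|a b c _ IHab _ IHbc].
- by apply: beq_step; apply: f_beta1.
- exact: beq_refl.
- exact: beq_sym.
- exact: beq_trans IHbc.
Qed.

Lemma beta_eq_sub s a b : beta_eq a b -> beta_eq (sub s a) (sub s b).
Proof. by apply: beta_eq_hom => a' b'; apply: beta1_sub. Qed.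

Lemma beta_eq_appl a a' b : beta_eq a a' -> beta_eq (App a b) (App a' b).
Proof. by apply: (beta_eq_hom (App^~ b)) => a0 a1; apply: beta1_appl. Qed.

Lemma beta_eq_I t : beta_eq (App I_comb t) t.
Proof. by apply: beq_step; have := beta1_redex (Var 0) t; rewrite /= liftn0. Qed.

Lemma sub_apps s t l : sub s (apps t l) = apps (sub s t) (map (sub s) l).
Proof. by elim: l t => [|u l IH] t //=; rewrite /apps /= -/(apps _ _) IH. Qed.

Lemma sub_apps_Var s t a : sub s (apps t (map Var a)) = apps (sub s t) (map s a).
Proof. by rewrite sub_apps -map_comp. Qed.

Lemma apps_rcons t l u : apps t (rcons l u) = App (apps t l) u.
Proof. by rewrite /apps foldl_rcons. Qed.

Lemma apps_nseq_I k : beta_eq (apps I_comb (nseq k I_comb)) I_comb.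
Proof.
elim: k => [|k IH]; first exact: beq_refl.
rewrite -addn1 nseqD cats1 apps_rcons.
exact: beq_trans (beta_eq_appl _ _ _ IH) (beta_eq_I _).
Qed.

Lemma apps_I_spine k t u l :
  u :: l = rcons (nseq k I_comb) t -> beta_eq (apps u l) t.
Proof.
case: k => [[-> ->]|k [-> ->]]; first exact: beq_refl.
by rewrite apps_rcons; apply: beq_trans (beta_eq_appl _ _ _ (apps_nseq_I k)) (beta_eq_I _).
Qed.

Definition subs_of (a : seq nat) (l : seq term) (i : nat) : term :=
  if i \in a then nth (Var i) l (index i a) else Var i.

Lemma map_subs_of a l : uniq a -> size l = size a -> map (subs_of a l) a = l.
Proof.
move=> ua sla; apply: (@eq_from_nth _ (Var 0)); first by rewrite size_map sla.
move=> k; rewrite size_map => ka.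
by rewrite (nth_map 0) // /subs_of mem_nth // index_uniq // (set_nth_default (Var 0)) ?sla.
Qed.

Lemma sub_subs_of_fresh a l t : all (fun x => ~~ free x t) a -> sub (subs_of a l) t = t.
Proof.
move=> /allP a_fresh; apply: sub_free_id => i ti; rewrite /subs_of.
by case: ifP => // /a_fresh; rewrite ti.
Qed.

Theorem proposition3p10 (n : nat) (N : term) (a : seq nat) :
  1 <= n -> size a = n -> uniq a -> all (fun x => ~~ free x N) a ->
  beta_eq (apps N (map Var a))
          (App (apps (Var (head 0 a)) (map Var (behead a))) (apps N (map Var a))) ->
  fpc (apps N (nseq n.-1 I_comb)).
Proof.
move=> n_gt0 size_a ua a_fresh fixN x _.
pose l := rcons (nseq n.-1 I_comb) (Var x).
have size_l : size l = size a by rewrite size_rcons size_nseq prednK ?size_a.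
set σ := subs_of a l.
have a_cons : a = head 0 a :: behead a.
  by move: n_gt0; rewrite -size_a; case: (a).
have l_eq : σ (head 0 a) :: map σ (behead a) = l.
  by rewrite -[_ :: _]/(map σ (_ :: _)) -a_cons map_subs_of.
move/(beta_eq_sub σ): fixN; rewrite /= !sub_apps_Var sub_subs_of_fresh //.
rewrite map_subs_of // apps_rcons => fixNI; apply: beq_trans fixNI _.
by apply: beta_eq_appl; apply: apps_I_spine l_eq.
Qed.
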